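(* Let $(X,\tau)$ be an extended locally convex space with finest locally convex topology $\tau_F$, let $Y$ be a closed linear subspace of $(X,\tau)$, and let $\pi:X\to X/Y$, $\pi(x)=x+Y$, be the quotient map. Then the quotient topology $\pi(\tau_F)$ on $X/Y$ is the finest locally convex topology of the extended locally convex space $(X/Y,\pi(\tau))$. Moreover, $(X/Y,\pi(\tau))^*=(X/Y,\pi(\tau_F))^*$.
   Context: An extended seminorm on a vector space $X$ over $\mathbb{R}$ or $\mathbb{C}$ is a map $\rho:X\to[0,\infty]$ with $\rho(\alpha x)=|\alpha|\rho(x)$ and $\rho(x+y)\le\rho(x)+\rho(y)$. An extended locally convex space $(X,\tau)$ is a vector space with the topology induced by a family $\{\rho_i\}$ of extended seminorms (neighborhood base at $x_0$: $\{x:\max_{i\in J}\rho_i(x-x_0)<\varepsilon\}$, $J$ finite, $\varepsilon>0$). A locally convex topology is one induced in this way by finite-valued seminorms. The finest locally convex topology of an elcs $(X,\tau)$ is the locally convex topology $\tau_F\subseteq\tau$ such that every locally convex topology $\sigma\subseteq\tau$ on $X$ satisfies $\sigma\subseteq\tau_F$. For a topology $\eta$ on $X$, $\pi(\eta)$ denotes the quotient topology on $X/Y$ (the finest topology making $\pi$ continuous). $(Z,\sigma)^*$ denotes the set of $\sigma$-continuous linear functionals on $Z$. *)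

From mathcomp Require Import all_boot all_order all_algebra.
From mathcomp Require Import all_classical reals constructive_ereal complex.
Set Implicit Arguments. Unset Strict Implicit. Unset Printing Implicit Defensive.
Import Order.TTheory GRing.Theory Num.Theory.
Local Open Scope ring_scope.
Local Open Scope classical_set_scope.
Local Open Scope ereal_scope.

Definition RorC (R : realType) (b : bool) : numFieldType :=
  if b then (R[i] : numFieldType) else (R : numFieldType).

Section Defs.
Context {K : numFieldType}.

(* extended seminorm  rho : X -> [0, +oo] ; the convention 0 * +oo = 0 is
   the one of mathcomp's extended reals *)
Definition ext_seminorm {X : lmodType K} (rho : X -> \bar K) : Prop :=
  [/\ (forall x, 0 <= rho x),
      (forall (a : K) x, rho (a *: x) = (`|a|)%:E * rho x)
    & (forall x y, rho (x + y)%R <= rho x + rho y)].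

Definition fin_seminorm {X : lmodType K} (rho : X -> \bar K) : Prop :=
  ext_seminorm rho /\ (forall x, rho x < +oo).

Definition induced_top {X : lmodType K} {I : Type} (rho : I -> X -> \bar K)
  : set (set X) :=
  [set U | forall x0, U x0 -> exists (J : set I) (e : K),
      [/\ finite_set J, (0 < e)%R &
          [set x | forall i, J i -> rho i (x - x0)%R < e%:E] `<=` U]].

Definition is_elcs_top {X : lmodType K} (tau : set (set X)) : Prop :=
  exists (I : Type) (rho : I -> X -> \bar K),
    (forall i, ext_seminorm (rho i)) /\ tau = induced_top rho.

Definition is_lc_top {X : lmodType K} (tau : set (set X)) : Prop :=
  exists (I : Type) (rho : I -> X -> \bar K),
    (forall i, fin_seminorm (rho i)) /\ tau = induced_top rho.

Definition is_finest_lc {X : lmodType K} (tau sigma : set (set X)) : Prop :=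
  [/\ is_lc_top sigma, sigma `<=` tau &
      forall sigma', is_lc_top sigma' -> sigma' `<=` tau -> sigma' `<=` sigma].

Definition quotient_top {X Q : lmodType K} (pi : X -> Q) (tau : set (set X))
  : set (set Q) := [set V | tau (pi @^-1` V)].

Definition closed_in {X : Type} (tau : set (set X)) (A : set X) : Prop :=
  tau (~` A).

Definition linear_subspace {X : lmodType K} (Y : set X) : Prop :=
  Y 0%R /\ (forall (a : K) x y, Y x -> Y y -> Y (a *: x + y)%R).

Definition is_linear_map {X Q : lmodType K} (f : X -> Q) : Prop :=
  forall (a : K) x y, f (a *: x + y)%R = (a *: f x + f y)%R.

Definition is_linear_functional {Q : lmodType K} (f : Q -> K) : Prop :=
  forall (a : K) x y, f (a *: x + y)%R = (a * f x + f y)%R.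

Definition continuous_wrt {Q : Type} (sigma : set (set Q)) (f : Q -> K) : Prop :=
  forall x0 (e : K), (0 < e)%R ->
    exists U, [/\ sigma U, U x0 & forall x, U x -> (`|f x - f x0| < e)%R].

Definition top_dual {Q : lmodType K} (sigma : set (set Q)) : set (Q -> K) :=
  [set f | is_linear_functional f /\ continuous_wrt sigma f].

End Defs.

From HB Require Import structures.
From Stdlib Require List.
From mathcomp Require Import all_boot all_order all_algebra.
From mathcomp Require Import all_classical reals constructive_ereal complex ereal.
From mathcomp Require Import lra.
Import Order.TTheory GRing.Theory Num.Theory.
Set Implicit Arguments. Unset Strict Implicit. Unset Printing Implicit Defensive.
Local Open Scope ring_scope.
Local Open Scope classical_set_scope.

(* If tau is induced by extended seminorms rho_i, then pi(tau) is induced by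
   the quotient seminorms q_L(q) = inf { max_{i in L} rho_i(x) : pi x = q },
   L a finite list of indices; these are finite when the rho_i are, so
   pi(tau_F) is a locally convex topology, and it is coarser than pi(tau).
   Conversely, if a locally convex sigma is coarser than pi(tau), the
   seminorms of sigma composed with pi induce a locally convex topology
   coarser than tau, hence coarser than tau_F, so sigma is coarser than
   pi(tau_F).  The duals agree because a continuous linear functional f is
   continuous for the locally convex topology induced by |f|.
   Infima exist in \bar R but not in \bar K for K = R[i], so the quotient
   seminorms are computed after identifying the nonnegative scalars of K
   with those of R. *)

Lemma finite_set_In {T : Type} (A : set T) :
  finite_set A <-> exists L : seq T, A = [set x | List.In x L].
Proof.
elim/Pchoice: T A => T A.
have InE (L : seq T) : [set x | List.In x L] = [set` L].
  apply/seteqP; split=> x /=; elim: L => //= a L IH; rewrite in_cons.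
    by case=> [->|/IH ->]; rewrite ?eqxx ?orbT.
  by case/orP=> [/eqP ->|/IH]; [left|right].
rewrite finite_seqP; split=> -[L ->]; exists L; by rewrite InE.
Qed.

Section ScalarTransfer.
Variables (K : numFieldType) (R : realType).
Variables (emb : {rmorphism R -> K}) (re : K -> R).
Hypotheses (ler_emb : {mono emb : r s / r <= s}) (embK : cancel emb re)
  (reK : forall z, 0 <= z -> emb (re z) = z).

Let emb_inj : injective emb := can_inj embK.
Let ltr_emb : {mono emb : r s / r < s} := leW_mono ler_emb.

Lemma re_ge0 z : 0 <= z -> 0 <= re z.
Proof. by move=> z0; rewrite -ler_emb rmorph0 reK. Qed.

Lemma ler_re z w : 0 <= z -> 0 <= w -> (re z <= re w) = (z <= w).
Proof. by move=> z0 w0; rewrite -ler_emb !reK. Qed.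

Lemma ltr_re z w : 0 <= z -> 0 <= w -> (re z < re w) = (z < w).
Proof. by move=> z0 w0; rewrite -ltr_emb !reK. Qed.

Lemma re_gt0 z : 0 < z -> 0 < re z.
Proof. by move=> z0; rewrite -ltr_emb rmorph0 reK ?ltW. Qed.

Lemma reD z w : 0 <= z -> 0 <= w -> re (z + w) = re z + re w.
Proof. by move=> z0 w0; apply: emb_inj; rewrite rmorphD !reK ?addr_ge0. Qed.

Lemma reM z w : 0 <= z -> 0 <= w -> re (z * w) = re z * re w.
Proof. by move=> z0 w0; apply: emb_inj; rewrite rmorphM !reK ?mulr_ge0. Qed.

Definition nrm (a : K) : R := re `|a|.

Lemma nrm_ge0 a : 0 <= nrm a.
Proof. exact: re_ge0. Qed.

Lemma nrm_gt0 a : a != 0 -> 0 < nrm a.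
Proof. by move=> a0; apply: re_gt0; rewrite normr_gt0. Qed.

Lemma nrm0 : nrm 0 = 0.
Proof. by apply: emb_inj; rewrite reK normr0 ?rmorph0. Qed.

Lemma nrmV a : a != 0 -> nrm a * nrm a^-1 = 1.
Proof.
by move=> a0; apply: emb_inj; rewrite rmorphM rmorph1 !reK // -normrM mulfV ?normr1.
Qed.

Local Open Scope ereal_scope.

Definition er : \bar K -> \bar R := er_map re.
Definition ee : \bar R -> \bar K := er_map emb.

Lemma eeK : cancel ee er.
Proof. by case=> //= r; rewrite embK. Qed.

Lemma ereK y : 0 <= y -> ee (er y) = y.
Proof. by case: y => //= r r0; rewrite reK // -lee_fin. Qed.

Lemma er_ge0 y : 0 <= y -> 0 <= er y.
Proof. by case: y => //= r; rewrite !lee_fin; exact: re_ge0. Qed.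

Lemma ee_ge0 y : 0 <= y -> 0 <= ee y.
Proof. by case: y => //= r; rewrite !lee_fin -ler_emb rmorph0. Qed.

Lemma lee_er y w : 0 <= y -> 0 <= w -> (er y <= er w) = (y <= w).
Proof.
case: y => [r||]; case: w => [s||] //= r0 s0; rewrite ?leey //.
- by rewrite !lee_fin ler_re // -lee_fin.
- by rewrite real_leey /= ger0_real // -lee_fin.
Qed.

Lemma lte_er y w : 0 <= y -> 0 <= w -> (er y < er w) = (y < w).
Proof.
case: y => [r||]; case: w => [s||] //= r0 s0; rewrite ?ltry //.
- by rewrite !lte_fin ltr_re // -lee_fin.
- by rewrite real_ltry ger0_real // -lee_fin.
Qed.

Lemma erD y w : 0 <= y -> 0 <= w -> er (y + w) = er y + er w.
Proof.
case: y => [r||]; case: w => [s||] //= r0 s0.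
by rewrite reD // -lee_fin.
Qed.

Lemma erM a y : 0 <= y -> er (`|a|%:E * y) = (nrm a)%:E * er y.
Proof.
case: y => [r||] //= r0; first by rewrite reM // -lee_fin.
have [->|a0] := eqVneq a 0%R; first by rewrite normr0 nrm0 !mul0e /= -(rmorph0 emb) embK.
rewrite gt0_muley ?lte_fin ?nrm_gt0 //.
by rewrite /mule /= eqe normr_eq0 (negPf a0) lte_fin normr_gt0 a0.
Qed.

Definition ext_seminormR {V : lmodType K} (p : V -> \bar R) : Prop :=
  [/\ (forall x, 0 <= p x),
      (forall a x, p (a *: x) = (nrm a)%:E * p x)
    & (forall x y, p (x + y)%R <= p x + p y)].

Definition induced_topR {V : lmodType K} {I : Type} (p : I -> V -> \bar R)
  : set (set V) :=
  [set U | forall x0, U x0 -> exists (J : set I) (e : R),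
      [/\ finite_set J, (0 < e)%R &
          [set x | forall i, J i -> p i (x - x0)%R < e%:E] `<=` U]].

Lemma ext_seminormR_er (V : lmodType K) (p : V -> \bar K) :
  ext_seminorm p -> ext_seminormR (er \o p).
Proof.
case=> p0 pZ pD; split=> [x|a x|x y] /=; first exact: er_ge0.
  by rewrite pZ erM.
by rewrite -erD // lee_er ?adde_ge0.
Qed.

Lemma ext_seminorm_ee (V : lmodType K) (p : V -> \bar R) :
  ext_seminormR p -> ext_seminorm (ee \o p).
Proof.
case=> p0 pZ pD; split=> [x|a x|x y] /=; first exact: ee_ge0.
  rewrite -[RHS]ereK; last by apply: mule_ge0; rewrite ?lee_fin ?ee_ge0.
  by rewrite erM ?ee_ge0 // eeK pZ.
by rewrite -lee_er ?adde_ge0 ?ee_ge0 // erD ?ee_ge0 // !eeK.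
Qed.

Lemma induced_top_er (V : lmodType K) (I : Type) (rho : I -> V -> \bar K) :
  (forall i x, 0 <= rho i x) -> induced_top rho = induced_topR (fun i => er \o rho i).
Proof.
move=> rho0; apply/seteqP; split=> U HU x0 /HU [J [e [fJ e0 sub]]].
  exists J, (re e); split=> // [|x Hx]; first exact: re_gt0.
  by apply: sub => i Ji; rewrite -lte_er ?rho0 ?lee_fin ?(ltW e0) //; exact: Hx.
have emb_e0 : (0 < emb e)%R by rewrite -(rmorph0 emb) ltr_emb.
exists J, (emb e); split=> // x Hx; apply: sub => i Ji; have := Hx i Ji.
by rewrite -lte_er ?rho0 ?lee_fin ?(ltW emb_e0) //= embK.
Qed.

Lemma induced_top_ee (V : lmodType K) (I : Type) (p : I -> V -> \bar R) :
  (forall i x, 0 <= p i x) -> induced_top (fun i => ee \o p i) = induced_topR p.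
Proof.
move=> p0; rewrite induced_top_er => [|i x]; last exact: ee_ge0.
by congr induced_topR; apply/funext => i; apply/funext => x /=; rewrite eeK.
Qed.

Lemma ext_seminormR0 (V : lmodType K) (p : V -> \bar R) :
  ext_seminormR p -> p 0%R = 0.
Proof. by case=> _ pZ _; rewrite -(scale0r 0%R) pZ nrm0 mul0e. Qed.

Lemma ext_seminorm0 (V : lmodType K) (p : V -> \bar K) :
  ext_seminorm p -> p 0%R = 0.
Proof. by case=> _ pZ _; rewrite -(scale0r 0%R) pZ normr0 mul0e. Qed.

Section MaxSeminorm.
Variables (V : lmodType K) (I : Type) (p : I -> V -> \bar R).
Hypothesis p_sn : forall i, ext_seminormR (p i).

Definition max_seminorm (L : seq I) (x : V) : \bar R := \big[maxe/0]_(i <- L) p i x.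

Lemma max_seminorm_lt L x (e : R) :
  max_seminorm L x < e%:E <-> (0 < e)%R /\ forall i, List.In i L -> p i x < e%:E.
Proof.
rewrite /max_seminorm; elim: L => [|a L IH]; rewrite ?big_nil ?big_cons.
  by rewrite lte_fin; split=> [|[]].
rewrite gt_max; split=> [/andP[pa /IH[e0 pL]]|[e0 pL]].
  by split=> // i [<-|/pL].
apply/andP; split; first by apply: pL; left.
by apply/IH; split=> // i iL; apply: pL; right.
Qed.

Lemma max_seminorm_ge0 L x : 0 <= max_seminorm L x.
Proof.
by rewrite /max_seminorm; elim: L => [|a L IH]; rewrite ?big_nil ?big_cons ?le_max ?IH ?orbT.
Qed.

Lemma ext_seminormR_max L : ext_seminormR (max_seminorm L).
Proof.
split=> [x|a x|x y]; first exact: max_seminorm_ge0.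
  rewrite /max_seminorm; elim: L => [|i L IH]; rewrite ?big_nil ?big_cons ?mule0 //.
  by case: (p_sn i) => _ pZ _; rewrite pZ IH maxe_pMr // lee_fin nrm_ge0.
rewrite /max_seminorm; elim: L => [|i L IH]; rewrite ?big_nil ?big_cons ?adde0 //.
case: (p_sn i) => _ _ pD; rewrite ge_max; apply/andP; split.
  by apply: le_trans (pD x y) _; apply: leeD; rewrite le_max lexx.
by apply: le_trans IH _; apply: leeD; rewrite le_max lexx orbT.
Qed.

Lemma max_seminorm_lty L x : (forall i, p i x < +oo) -> max_seminorm L x < +oo.
Proof.
by move=> px; rewrite /max_seminorm; elim: L => [|i L IH]; rewrite ?big_nil ?big_cons ?gt_max ?px ?IH.
Qed.

Lemma induced_topR_max_ball L x0 (e : R) :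
  induced_topR p [set x | max_seminorm L (x - x0)%R < e%:E].
Proof.
move=> x1 /= x1_ball.
have d_fin : max_seminorm L (x1 - x0)%R \is a fin_num.
  by rewrite ge0_fin_numE ?max_seminorm_ge0 // (lt_trans x1_ball) ?ltry.
set d := fine (max_seminorm L (x1 - x0)%R).
have dE : max_seminorm L (x1 - x0)%R = d%:E by rewrite fineK.
have de : (d < e)%R by rewrite -lte_fin -dE.
exists [set i | List.In i L], (e - d)%R; split=> [||x /= x_ball].
- by apply/finite_set_In; exists L.
- by rewrite subr_gt0.
- have x1_near : max_seminorm L (x - x1)%R < (e - d)%:E.
    by apply/max_seminorm_lt; rewrite subr_gt0.
  have -> : (x - x0 = (x - x1) + (x1 - x0))%R by rewrite addrA subrK.
  case: (ext_seminormR_max L) => _ _ maxD; apply: le_lt_trans (maxD _ _) _.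
  by rewrite dE -[e](subrK d) EFinD lte_leD.
Qed.

Lemma induced_topR_ball (J : set I) x0 (e : R) : finite_set J -> (0 < e)%R ->
  induced_topR p [set x | forall i, J i -> p i (x - x0)%R < e%:E].
Proof.
move=> /finite_set_In [L ->] e0.
have -> : [set x | forall i, List.In i L -> p i (x - x0)%R < e%:E] =
          [set x | max_seminorm L (x - x0)%R < e%:E].
  by apply/seteqP; split=> x /=; rewrite max_seminorm_lt => // [[]].
exact: induced_topR_max_ball.
Qed.

End MaxSeminorm.

Section QuotientSeminorm.
Variables (X Q : lmodType K) (pi : X -> Q).
Hypotheses (pi_lin : is_linear_map pi) (pi_surj : forall q, exists x, pi x = q).
HB.instance Definition _ := GRing.isLinear.Build K X Q *:%R pi pi_lin.
Variables (I : Type) (rho : I -> X -> \bar R).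
Hypothesis rho_sn : forall i, ext_seminormR (rho i).

Definition quotient_seminorm (L : seq I) (q : Q) : \bar R :=
  ereal_inf [set max_seminorm rho L x | x in pi @^-1` [set q]].

Lemma quotient_seminorm_le L x : quotient_seminorm L (pi x) <= max_seminorm rho L x.
Proof. by apply: ereal_inf_lbound; exists x. Qed.

Lemma quotient_seminorm_lt L q y :
  quotient_seminorm L q < y -> exists2 x, pi x = q & max_seminorm rho L x < y.
Proof. by case/ereal_inf_lt => _ [x px <-]; exists x. Qed.

Lemma quotient_seminorm_ge0 L q : 0 <= quotient_seminorm L q.
Proof. by apply: le_ereal_inf_tmp => _ [x _ <-]; exact: max_seminorm_ge0. Qed.

Lemma quotient_seminormZ_le L a q :
  a != 0%R -> quotient_seminorm L (a *: q) <= (nrm a)%:E * quotient_seminorm L q.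
Proof.
move=> a0; rewrite -ereal_inf_pZl ?nrm_gt0 //.
apply: le_ereal_inf_tmp => _ [_ [x <- <-] <-].
case: (ext_seminormR_max rho_sn L) => _ maxZ _.
by apply: ereal_inf_lbound; exists (a *: x); rewrite /= ?linearZ ?maxZ.
Qed.

Lemma quotient_seminormZ L a q :
  quotient_seminorm L (a *: q) = (nrm a)%:E * quotient_seminorm L q.
Proof.
have [->|a0] := eqVneq a 0%R.
  rewrite scale0r nrm0 mul0e; apply/eqP; rewrite eq_le quotient_seminorm_ge0 andbT.
  rewrite -(linear0 pi); apply: le_trans (quotient_seminorm_le _ _) _.
  by rewrite (ext_seminormR0 (ext_seminormR_max rho_sn L)).
apply/eqP; rewrite eq_le quotient_seminormZ_le //=.
have le_inv : quotient_seminorm L q <= (nrm a^-1)%:E * quotient_seminorm L (a *: q).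
  by rewrite -{1}(scalerK a0 q) quotient_seminormZ_le // invr_eq0.
apply: le_trans (lee_wpmul2l _ le_inv) _; first by rewrite lee_fin nrm_ge0.
by rewrite muleA -EFinM nrmV // mul1e.
Qed.

Lemma quotient_seminormD L q1 q2 :
  quotient_seminorm L (q1 + q2)%R <= quotient_seminorm L q1 + quotient_seminorm L q2.
Proof.
have q1_ge0 := quotient_seminorm_ge0 L q1; have q2_ge0 := quotient_seminorm_ge0 L q2.
case E1 : (quotient_seminorm L q1) q1_ge0 => [r1||] // _; last first.
  by case: (quotient_seminorm L q2) q2_ge0 => [r2||] // _; rewrite addye ?leey.
case E2 : (quotient_seminorm L q2) q2_ge0 => [r2||] // _; last by rewrite addey ?leey.
apply/lee_addgt0Pr => e e0.
have [x1 <- x1_lt] : exists2 x, pi x = q1 & max_seminorm rho L x < (r1 + e / 2)%:E.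
  by apply: quotient_seminorm_lt; rewrite E1 lte_fin ltrDl divr_gt0.
have [x2 <- x2_lt] : exists2 x, pi x = q2 & max_seminorm rho L x < (r2 + e / 2)%:E.
  by apply: quotient_seminorm_lt; rewrite E2 lte_fin ltrDl divr_gt0.
case: (ext_seminormR_max rho_sn L) => _ _ maxD.
rewrite -linearD; apply: le_trans (quotient_seminorm_le _ _) _.
apply: le_trans (maxD _ _) _; apply: le_trans (leeD (ltW x1_lt) (ltW x2_lt)) _.
by rewrite -!EFinD lee_fin; lra.
Qed.

Lemma ext_seminormR_quotient L : ext_seminormR (quotient_seminorm L).
Proof.
split; [exact: quotient_seminorm_ge0|exact: quotient_seminormZ|exact: quotient_seminormD].
Qed.

Lemma quotient_seminorm_lty L q :
  (forall i x, rho i x < +oo) -> quotient_seminorm L q < +oo.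
Proof.
move=> rho_fin; have [x <-] := pi_surj q.
by apply: le_lt_trans (quotient_seminorm_le _ _) _; exact: max_seminorm_lty.
Qed.

Lemma quotient_induced_topR : quotient_top pi (induced_topR rho) = induced_topR quotient_seminorm.
Proof.
apply/seteqP; split=> W HW.
- move=> q0 Wq0; have [x0 px0] := pi_surj q0.
  have Wx0 : (pi @^-1` W) x0 by rewrite /preimage /= px0.
  have [J [e [/finite_set_In [L JE] e0 sub]]] := HW x0 Wx0.
  exists [set L], e; split=> //.
  move=> q /(_ L erefl) /quotient_seminorm_lt [x px /max_seminorm_lt [_ x_ball]].
  have <- : pi (x0 + x)%R = q by rewrite linearD /= px0 px addrC subrK.
  by apply: sub => i; rewrite JE addrAC subrr add0r; exact: x_ball.
- move=> x0 /HW [JJ [e [/finite_set_In [LL JJE] e0 sub]]].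
  exists [set i | List.In i (List.concat LL)], e; split=> //.
    by apply/finite_set_In; eexists.
  move=> x x_ball; apply: sub => L; rewrite JJE => L_LL.
  rewrite -linearB; apply: le_lt_trans (quotient_seminorm_le _ _) _.
  apply/max_seminorm_lt; split=> // i iL; apply: x_ball.
  by apply/List.in_concat; exists L.
Qed.

End QuotientSeminorm.

Lemma induced_top_ball (V : lmodType K) (I : Type) (p : I -> V -> \bar K)
    (J : set I) x0 (e : K) :
  (forall i, ext_seminorm (p i)) -> finite_set J -> (0 < e)%R ->
  induced_top p [set x | forall i, J i -> p i (x - x0)%R < e%:E].
Proof.
move=> p_sn fJ e0; have p0 i x : 0 <= p i x by case: (p_sn i).
have -> : [set x | forall i, J i -> p i (x - x0)%R < e%:E] =
          [set x | forall i, J i -> er (p i (x - x0)%R) < (re e)%:E].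
  apply/seteqP; split=> x /= x_ball i /x_ball;
  by rewrite -[(re e)%:E]/(er e%:E) lte_er ?p0 ?lee_fin ?(ltW e0).
rewrite induced_top_er //; apply: induced_topR_ball => //; last exact: re_gt0.
by move=> i; apply: ext_seminormR_er.
Qed.

Section Quotient.
Variables (X Q : lmodType K) (pi : X -> Q).
Hypotheses (pi_lin : is_linear_map pi) (pi_surj : forall q, exists x, pi x = q).
HB.instance Definition _ := GRing.isLinear.Build K X Q *:%R pi pi_lin.

Definition quotient_family (I : Type) (rho : I -> X -> \bar K) (L : seq I) : Q -> \bar K :=
  ee \o quotient_seminorm pi (fun i => er \o rho i) L.

Lemma quotient_induced_top (I : Type) (rho : I -> X -> \bar K) :
  (forall i, ext_seminorm (rho i)) ->
  quotient_top pi (induced_top rho) = induced_top (quotient_family rho).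
Proof.
move=> rho_sn; have rho0 i x : 0 <= rho i x by case: (rho_sn i).
rewrite (induced_top_er rho0) (quotient_induced_topR pi_lin pi_surj).
by rewrite induced_top_ee // => L q; exact: quotient_seminorm_ge0.
Qed.

Lemma is_elcs_top_quotient (tau : set (set X)) :
  is_elcs_top tau -> is_elcs_top (quotient_top pi tau).
Proof.
case=> I [rho [rho_sn ->]]; exists (seq I), (quotient_family rho).
split; last exact: quotient_induced_top.
move=> L; apply/ext_seminorm_ee/(ext_seminormR_quotient pi_lin) => i.
exact: ext_seminormR_er.
Qed.

Lemma is_lc_top_quotient (tau : set (set X)) :
  is_lc_top tau -> is_lc_top (quotient_top pi tau).
Proof.
case=> I [rho [rho_sn ->]]; exists (seq I), (quotient_family rho).
have rho_esn i : ext_seminorm (rho i) by case: (rho_sn i).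
split=> [L|]; last exact: quotient_induced_top.
split=> [|q].
  by apply/ext_seminorm_ee/(ext_seminormR_quotient pi_lin) => i; exact: ext_seminormR_er.
rewrite /= -lte_er ?ee_ge0 ?quotient_seminorm_ge0 //= eeK.
apply: (quotient_seminorm_lty pi_surj) => i x /=.
have [[rho0 _ _] rho_fin] := rho_sn i.
by rewrite -[+oo]/(er +oo) lte_er ?rho_fin.
Qed.

Lemma fin_seminorm_comp (p : Q -> \bar K) : fin_seminorm p -> fin_seminorm (p \o pi).
Proof.
case=> -[p0 pZ pD] p_fin; split=> [|x]; last exact: p_fin.
split=> [x|a x|x y] /=; first exact: p0.
  by rewrite linearZ /= pZ.
by rewrite linearD /= pD.
Qed.

Lemma induced_top_comp_sub (I J : Type) (p : I -> Q -> \bar K) (rho : J -> X -> \bar K) :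
  (forall i, ext_seminorm (p i)) -> induced_top p `<=` quotient_top pi (induced_top rho) ->
  induced_top (fun i => p i \o pi) `<=` induced_top rho.
Proof.
move=> p_sn p_sub U HU x0 /HU [F [e [fF e0 sub]]].
have ball_open := p_sub _ (induced_top_ball (x0 := pi x0) p_sn fF e0).
have [|G [d [fG d0 ball_sub]]] := ball_open x0.
  by move=> i _ /=; rewrite subrr (ext_seminorm0 (p_sn i)) lte_fin.
exists G, d; split=> // x /ball_sub x_ball; apply: sub => i /x_ball /=.
by rewrite linearB.
Qed.

Lemma induced_top_sub_quotient_comp (I : Type) (p : I -> Q -> \bar K) :
  induced_top p `<=` quotient_top pi (induced_top (fun i => p i \o pi)).
Proof.
move=> W HW x0 /HW [J [e [fJ e0 sub]]]; exists J, e; split=> // x x_ball.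
by apply: sub => i /x_ball /=; rewrite linearB.
Qed.

Lemma quotient_finest_lc_sub (tau tauF : set (set X)) (sigma : set (set Q)) :
  is_elcs_top tau -> is_finest_lc tau tauF ->
  is_lc_top sigma -> sigma `<=` quotient_top pi tau -> sigma `<=` quotient_top pi tauF.
Proof.
case=> I [rho [_ ->]] [_ _ finest] [J [p [p_sn ->]]] p_sub.
have p_esn i : ext_seminorm (p i) by case: (p_sn i).
have comp_lc : is_lc_top (induced_top (fun i => p i \o pi)).
  by exists J, (fun i => p i \o pi); split=> // i; exact: fin_seminorm_comp.
have comp_sub := finest _ comp_lc (induced_top_comp_sub p_esn p_sub).
by move=> W /induced_top_sub_quotient_comp; exact: comp_sub.
Qed.

End Quotient.

Section Dual.
Variables (V : lmodType K) (f : V -> K).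
Hypothesis f_lin : is_linear_functional f.
HB.instance Definition _ := GRing.isLinear.Build K V K *%R f f_lin.

Definition norm_family : unit -> V -> \bar K := fun _ x => `|f x|%:E.

Lemma fin_seminorm_norm_family i : fin_seminorm (norm_family i).
Proof.
split=> [|x]; last by rewrite real_ltry normr_real.
split=> [x|a x|x y]; rewrite /norm_family.
- exact: normr_ge0.
- by rewrite linearZ /= normrM.
- by rewrite linearD /= lee_fin ler_normD.
Qed.

Lemma induced_top_norm_family_sub (tau : set (set V)) :
  is_elcs_top tau -> continuous_wrt tau f -> induced_top norm_family `<=` tau.
Proof.
case=> I [rho [_ ->]] f_cont W HW x0 /HW [J [e [_ e0 sub]]].
have [U [HU Ux0 f_near]] := f_cont x0 e e0.
have [G [d [fG d0 ball_sub]]] := HU x0 Ux0.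
exists G, d; split=> // x /ball_sub /f_near fx_near; apply: sub => i _.
by rewrite /norm_family lte_fin linearB.
Qed.

Lemma continuous_wrt_norm_family (sigma : set (set V)) :
  induced_top norm_family `<=` sigma -> continuous_wrt sigma f.
Proof.
move=> sub x0 e e0; exists [set x | forall i, setT i -> norm_family i (x - x0)%R < e%:E].
split=> [|i _|x /(_ tt I)]; rewrite /norm_family ?linearB ?subrr ?normr0 ?lte_fin //.
by apply/sub/induced_top_ball => // i; case: (fin_seminorm_norm_family i).
Qed.

End Dual.

Lemma top_dual_finest_lc (V : lmodType K) (tau tauF : set (set V)) :
  is_elcs_top tau -> is_finest_lc tau tauF -> top_dual tau = top_dual tauF.
Proof.
move=> tau_elcs [_ subF finest]; apply/seteqP; split=> f [f_lin f_cont]; split=> //.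
  apply: (continuous_wrt_norm_family f_lin); apply: finest.
    by exists unit, (norm_family f); split=> // i; exact: fin_seminorm_norm_family.
  exact: induced_top_norm_family_sub.
move=> x0 e e0; have [U [/subF U_open Ux0 f_near]] := f_cont x0 e e0.
by exists U.
Qed.

Theorem quotient_finest_lc (X : lmodType K) (tau tauF : set (set X))
    (Q : lmodType K) (pi : X -> Q) :
  is_elcs_top tau -> is_finest_lc tau tauF ->
  is_linear_map pi -> (forall q, exists x, pi x = q) ->
  [/\ is_elcs_top (quotient_top pi tau),
      is_finest_lc (quotient_top pi tau) (quotient_top pi tauF) &
      top_dual (quotient_top pi tau) = top_dual (quotient_top pi tauF)].
Proof.
move=> tau_elcs tauF_finest pi_lin pi_surj.
have [tauF_lc subF _] := tauF_finest.
have quotient_finest : is_finest_lc (quotient_top pi tau) (quotient_top pi tauF).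
  split; first exact: is_lc_top_quotient.
    by move=> W; apply: subF.
  by move=> sigma; apply: quotient_finest_lc_sub.
have quotient_elcs := is_elcs_top_quotient pi_lin pi_surj tau_elcs.
by split=> //; apply: top_dual_finest_lc.
Qed.

End ScalarTransfer.

Lemma complex_ge0_Re (R : realType) (z : R[i]) : 0 <= z -> ((complex.Re z)%:C)%C = z.
Proof. by move=> z0; rewrite RRe_real ?ger0_real. Qed.

Theorem theorem4p3 (R : realType) (b : bool)
  (X : lmodType (RorC R b)) (tau tauF : set (set X))
  (Htau : is_elcs_top tau) (HtauF : is_finest_lc tau tauF)
  (Y : set X) (HY : linear_subspace Y) (HYc : closed_in tau Y)
  (Q : lmodType (RorC R b)) (pi : X -> Q)
  (Hpi_lin : is_linear_map pi) (Hpi_surj : forall q : Q, exists x, pi x = q)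
  (Hpi_ker : forall x, pi x = 0 <-> Y x) :
  [/\ is_elcs_top (quotient_top pi tau),
      is_finest_lc (quotient_top pi tau) (quotient_top pi tauF) &
      top_dual (quotient_top pi tau) = top_dual (quotient_top pi tauF)].
Proof.
move: X tau tauF Htau HtauF Y HY HYc Q pi Hpi_lin Hpi_surj Hpi_ker.
case: b => X tau tauF Htau HtauF _ _ _ Q pi Hpi_lin Hpi_surj _.
- apply: (quotient_finest_lc (emb := real_complex R) (re := @complex.Re R)) => //.
  + exact: lecR.
  + exact: complex_ge0_Re.
- exact: (quotient_finest_lc (emb := idfun) (re := idfun)).
Qed.
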